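(* Let $\varphi$ be a skew-morphism of a finite group $A$ of order $n$ with power function $\pi:A\to\mathbb{Z}_n$, and let $\bar\varphi$ be the induced skew-morphism of $\bar A=A/\mathrm{Core}\,\varphi$. For any $x\in A$ the following are equivalent: (i) $x\in\mathrm{Smooth}\,\varphi$; (ii) $\pi(\varphi^i(x))=\pi(x)$ for all nonnegative integers $i$; (iii) $\bar x=x\,\mathrm{Core}\,\varphi\in\mathrm{Fix}\,\bar\varphi$.
   Context: A skew-morphism of a finite group $A$ is a permutation $\varphi$ of the set $A$ with $\varphi(1)=1$ for which there exists a function $\pi:A\to\mathbb{Z}_n$, where $n$ is the order of $\varphi$ as a permutation, such that $\varphi(xy)=\varphi(x)\varphi^{\pi(x)}(y)$ for all $x,y\in A$; $\pi$ is the power function. The kernel is $\mathrm{Ker}\,\varphi=\{x\in A:\pi(x)=1\}$ (a subgroup of $A$), and the core is $\mathrm{Core}\,\varphi=\bigcap_{i=1}^n\varphi^i(\mathrm{Ker}\,\varphi)$, a $\varphi$-invariant normal subgroup of $A$ contained in $\mathrm{Ker}\,\varphi$. For a $\varphi$-invariant normal subgroup $N$ of $A$, the induced skew-morphism $\bar\varphi$ of $A/N$ is $\bar\varphi(xN)=\varphi(x)N$, with power function $\bar\pi(xN)\equiv\pi(x)\pmod{|\bar\varphi|}$. $\mathrm{Fix}\,\psi$ denotes the set of fixed points of a permutation $\psi$. $\mathrm{Smooth}\,\varphi=\{x\in A:\varphi(x)\in x\,\mathrm{Core}\,\varphi\}$. *)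

From HB Require Import structures.
From mathcomp Require Import all_boot all_fingroup.
Set Implicit Arguments. Unset Strict Implicit. Unset Printing Implicit Defensive.

Local Open Scope group_scope.

(* The finite group A is the whole carrier of gT; phi : {perm gT} is a
   permutation of A, and the power function takes values in nat, read
   modulo n = #[phi] (the order of phi as a permutation), i.e. in Z_n. *)

Section Skew.
Variable gT : finGroupType.

Definition is_skew_morphism (phi : {perm gT}) (pi : gT -> nat) : Prop :=
  phi 1 = 1 /\ forall x y : gT, phi (x * y) = phi x * (phi ^+ pi x) y.

Definition skew_ker (phi : {perm gT}) (pi : gT -> nat) : {set gT} :=
  [set x | pi x == 1 %[mod #[phi]]].

Definition skew_core (phi : {perm gT}) (pi : gT -> nat) : {set gT} :=
  \bigcap_(i < #[phi]) ((phi ^+ i.+1) @: skew_ker phi pi).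

Definition skew_smooth (phi : {perm gT}) (pi : gT -> nat) : {set gT} :=
  [set x | phi x \in x *: skew_core phi pi].

Definition induced_skew (phi : {perm gT}) (N : {set gT})
  (X : coset_of N) : coset_of N := coset N (phi (repr X)).

End Skew.

Definition Fix (T : finType) (f : T -> T) : {set T} := [set X | f X == X].

Arguments induced_skew {gT} phi N X.

From HB Require Import structures.
From mathcomp Require Import all_boot all_fingroup.
From mathcomp Require Import cyclic zify.

(* Expanding phi(u v y) in two ways gives the multiplication rule
   pi(u v) = sum_(i < pi u) pi(phi^i v)  (mod #[phi]).
   By this rule the elements whose whole phi-orbit lies in Ker phi, which are
   exactly those of Core phi, form a normal subgroup, and pi is constant on
   the phi-orbit of x precisely when the displacement x^-1 phi(x) lies in
   Core phi.  That is the definition of Smooth phi, and, Core phi being normal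
   with phi(c y) = phi(c) phi(y) for c in Core phi, it also says that the
   induced map fixes x Core phi. *)

Set Implicit Arguments. Unset Strict Implicit. Unset Printing Implicit Defensive.
Local Open Scope group_scope.

Lemma mulg_perm_inj (gT : finGroupType) (u : gT) (f g : {perm gT}) :
  (forall y, u * f y = u * g y) -> f = g.
Proof. by move=> fg; apply/permP => y; apply: (mulgI u). Qed.

Section SkewMorphism.
Variables (gT : finGroupType) (phi : {perm gT}) (pi : gT -> nat).
Hypothesis skew_phi : is_skew_morphism phi pi.

Let phi1 : phi 1 = 1 := proj1 skew_phi.
Let phiM : forall x y, phi (x * y) = phi x * (phi ^+ pi x) y := proj2 skew_phi.

(* Residues mod #[phi] are represented by powers of phi: phi ^+ a = phi ^+ b
   iff a = b %[mod #[phi]]. *)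
Definition orbit_pi_sum (v : gT) (k : nat) : nat :=
  \sum_(i < k) pi ((phi ^+ i) v).

Lemma permXD a b y : (phi ^+ a) ((phi ^+ b) y) = (phi ^+ (b + a)) y.
Proof. by rewrite expgD permM. Qed.

Lemma permXS k y : (phi ^+ k.+1) y = phi ((phi ^+ k) y).
Proof. by rewrite expgSr permM. Qed.

Lemma skewX1 k : (phi ^+ k) 1 = 1.
Proof. by elim: k => [|k IHk]; rewrite ?expg0 ?perm1 // permXS IHk phi1. Qed.

Lemma skewXM k v y :
  (phi ^+ k) (v * y) = (phi ^+ k) v * (phi ^+ orbit_pi_sum v k) y.
Proof.
elim: k => [|k IHk]; first by rewrite /orbit_pi_sum big_ord0 !expg0 !perm1.
by rewrite !permXS IHk phiM permXD /orbit_pi_sum big_ord_recr.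
Qed.

Lemma skew_pi1 : phi ^+ pi 1 = phi.
Proof.
by apply/permP => y; have := phiM 1 y; rewrite mul1g phi1 mul1g => <-.
Qed.

Lemma skew_piM u v : phi ^+ pi (u * v) = phi ^+ orbit_pi_sum v (pi u).
Proof.
apply: (@mulg_perm_inj _ (phi (u * v))) => y.
by rewrite -phiM -mulgA !phiM skewXM mulgA.
Qed.

Lemma eq_orbit_pi_sum w w' k :
  (forall i, phi ^+ pi ((phi ^+ i) w) = phi ^+ pi ((phi ^+ i) w')) ->
  phi ^+ orbit_pi_sum w k = phi ^+ orbit_pi_sum w' k.
Proof.
move=> eq_w; elim: k => [|k IHk]; first by rewrite /orbit_pi_sum !big_ord0.
by rewrite /orbit_pi_sum !big_ord_recr !expgD -!/(orbit_pi_sum _ _) IHk eq_w.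
Qed.

Lemma eq_skew_piMr u v v' :
  (forall i, phi ^+ pi ((phi ^+ i) v) = phi ^+ pi ((phi ^+ i) v')) ->
  phi ^+ pi (u * v) = phi ^+ pi (u * v').
Proof. by move=> eq_v; rewrite !skew_piM; apply: eq_orbit_pi_sum. Qed.

Lemma orbit_pi_sum1 k : phi ^+ orbit_pi_sum 1 k = phi ^+ k.
Proof.
elim: k => [|k IHk]; first by rewrite /orbit_pi_sum big_ord0.
rewrite /orbit_pi_sum big_ord_recr expgD -/(orbit_pi_sum _ _) IHk.
by rewrite skewX1 skew_pi1 expgSr.
Qed.

Definition orbit_in_ker (y : gT) : Prop :=
  forall j, phi ^+ pi ((phi ^+ j) y) = phi.

Lemma orbit_in_ker_pi c : orbit_in_ker c -> phi ^+ pi c = phi.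
Proof. by move/(_ 0); rewrite expg0 perm1. Qed.

Lemma orbit_pi_sum_ker c k :
  orbit_in_ker c -> phi ^+ orbit_pi_sum c k = phi ^+ k.
Proof.
move=> kerc; rewrite -(orbit_pi_sum1 k); apply: eq_orbit_pi_sum => i.
by rewrite kerc skewX1 skew_pi1.
Qed.

Lemma orbit_in_kerX c m : orbit_in_ker c -> orbit_in_ker ((phi ^+ m) c).
Proof. by move=> kerc j; rewrite permXD kerc. Qed.

Lemma skew_piMl u v : orbit_in_ker u -> phi ^+ pi (u * v) = phi ^+ pi v.
Proof.
move=> keru; apply: (@mulg_perm_inj _ (phi (u * v))) => y.
by rewrite -phiM -mulgA !phiM orbit_in_ker_pi // phiM mulgA.
Qed.

Lemma skewXV j a : (phi ^+ j) a^-1 = ((phi ^+ orbit_pi_sum a^-1 j) a)^-1.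
Proof.
apply: (mulIg ((phi ^+ orbit_pi_sum a^-1 j) a)).
by rewrite mulVg -skewXM mulVg skewX1.
Qed.

Lemma orbit_in_ker1 : orbit_in_ker 1.
Proof. by move=> j; rewrite skewX1 skew_pi1. Qed.

Lemma orbit_in_kerM x y :
  orbit_in_ker x -> orbit_in_ker y -> orbit_in_ker (x * y).
Proof.
move=> kerx kery j; rewrite skewXM orbit_pi_sum_ker // skew_piMl ?kery //.
exact: orbit_in_kerX.
Qed.

Lemma orbit_in_kerJ c a : orbit_in_ker c -> orbit_in_ker (c ^ a).
Proof.
have pi_conj d b : orbit_in_ker d -> phi ^+ pi (b^-1 * d * b) = phi.
  move=> kerd; rewrite -mulgA (@eq_skew_piMr _ _ b) ?mulVg ?skew_pi1 // => i.
  by rewrite skewXM orbit_pi_sum_ker // skew_piMl //; apply: orbit_in_kerX.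
move=> kerc j; rewrite /conjg !skewXM (orbit_pi_sum_ker _ kerc) skewXV mulgA.
by apply: pi_conj; apply: orbit_in_kerX.
Qed.

Lemma mem_skew_ker z : (z \in skew_ker phi pi) = (phi ^+ pi z == phi).
Proof. by rewrite inE -eq_expg_mod_order expg1. Qed.

Lemma mem_skew_core y : y \in skew_core phi pi <-> orbit_in_ker y.
Proof.
have n_gt0 := order_gt0 phi.
have invX m : m <= #[phi] -> (phi ^+ m)^-1 = phi ^+ (#[phi] - m).
  by move=> le_m; apply/eqP; rewrite eq_invg_mul -expgD subnKC // expg_order.
have mem_imX m (A : {set gT}) z :
    (z \in (phi ^+ m) @: A) = ((phi ^+ m)^-1 z \in A).
  by rewrite -{1}(permKV (phi ^+ m) z) mem_imset //; apply: perm_inj.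
split=> [/bigcapP core_y j | ker_y].
  have lt_jn : j %% #[phi] < #[phi] by rewrite ltn_mod.
  have lt_i : #[phi] - (j %% #[phi]).+1 < #[phi] by lia.
  have := core_y (Ordinal lt_i) isT; rewrite mem_imX invX //=.
  have -> : #[phi] - (#[phi] - (j %% #[phi]).+1).+1 = j %% #[phi] by lia.
  by rewrite expg_mod_order mem_skew_ker => /eqP.
by apply/bigcapP => i _; rewrite mem_imX invX // mem_skew_ker ker_y.
Qed.

Lemma skew_core_group_set : group_set (skew_core phi pi).
Proof.
apply/group_setP; split=> [|a b]; first by apply/mem_skew_core/orbit_in_ker1.
move=> /mem_skew_core kera /mem_skew_core kerb.
exact/mem_skew_core/orbit_in_kerM.
Qed.

Canonical skew_core_group := Group skew_core_group_set.

Lemma skew_core_norm a : a \in 'N(skew_core phi pi).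
Proof.
rewrite inE; apply/subsetP => y; rewrite mem_conjg => /mem_skew_core kery.
by apply/mem_skew_core; rewrite -(conjgKV a y); apply: orbit_in_kerJ.
Qed.

Lemma skew_smooth_core x :
  (x \in skew_smooth phi pi) = (x^-1 * phi x \in skew_core phi pi).
Proof. by rewrite inE mem_lcoset. Qed.

Lemma pi_orbit_const_core x :
  (forall i, phi ^+ pi ((phi ^+ i) x) = phi ^+ pi x) ->
  orbit_in_ker (x^-1 * phi x).
Proof.
move=> const_x j; rewrite skewXM skewXV -permM -expgS permXS.
set w := (phi ^+ _) x.
rewrite (@eq_skew_piMr _ _ w) ?mulVg ?skew_pi1 // => i.
by rewrite -permXS !permXD !const_x.
Qed.

Lemma core_pi_orbit_const x : orbit_in_ker (x^-1 * phi x) ->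
  forall i, phi ^+ pi ((phi ^+ i) x) = phi ^+ pi x.
Proof.
move=> ker_x i.
suff [] : orbit_in_ker (((phi ^+ i) x)^-1 * phi ((phi ^+ i) x)) /\
          phi ^+ pi ((phi ^+ i) x) = phi ^+ pi x by [].
elim: i => [|i [ker_w IHi]]; first by rewrite expg0 perm1.
rewrite permXS; set w := (phi ^+ i) x in ker_w IHi *.
have phi_w : phi w = w * (w^-1 * phi w) by rewrite mulKVg.
split; last by rewrite {1}phi_w skew_piM orbit_pi_sum_ker.
by rewrite {2}phi_w phiM mulKg; apply: orbit_in_kerX.
Qed.

Lemma pi_orbit_constP x :
  (forall i, pi ((phi ^+ i) x) = pi x %[mod #[phi]]) <->
  x^-1 * phi x \in skew_core phi pi.
Proof.
split=> [const_x | /mem_skew_core ker_x i].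
  apply/mem_skew_core/pi_orbit_const_core => i.
  by apply/eqP; rewrite eq_expg_mod_order; apply/eqP/const_x.
by apply/eqP; rewrite -eq_expg_mod_order; apply/eqP/core_pi_orbit_const.
Qed.

Lemma eq_coset_skew_core a b :
  (coset (skew_core phi pi) a == coset (skew_core phi pi) b) =
  (a * b^-1 \in skew_core phi pi).
Proof.
rewrite -mem_rcoset.
exact/eqP/(rcoset_kercosetP (skew_core_norm a) (skew_core_norm b)).
Qed.

Lemma induced_skew_coset x :
  induced_skew phi (skew_core phi pi) (coset (skew_core phi pi) x) =
  coset (skew_core phi pi) (phi x).
Proof.
rewrite /induced_skew; set r := repr _.
have /eqP : coset (skew_core phi pi) r = coset (skew_core phi pi) x.
  exact: coset_reprK.
rewrite eq_coset_skew_core => /mem_skew_core ker_c.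
apply/eqP; rewrite eq_coset_skew_core -{1}(mulgKV x r) phiM orbit_in_ker_pi //.
rewrite mulgK.
by apply/mem_skew_core; have := orbit_in_kerX 1 ker_c; rewrite expg1.
Qed.

Lemma fix_induced_skew_core x :
  (coset (skew_core phi pi) x \in Fix (induced_skew phi (skew_core phi pi))) =
  (x^-1 * phi x \in skew_core phi pi).
Proof.
rewrite inE induced_skew_coset eq_coset_skew_core.
by rewrite -(memJ_norm _ (skew_core_norm x)) /conjg mulgKV.
Qed.

End SkewMorphism.

Theorem proposition3 (gT : finGroupType) (phi : {perm gT}) (pi : gT -> nat)
  (Hskew : is_skew_morphism phi pi) (x : gT) :
  [/\ (x \in skew_smooth phi pi) <->
        (forall i : nat, pi ((phi ^+ i)%g x) = pi x %[mod #[phi]%g]),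
      (forall i : nat, pi ((phi ^+ i)%g x) = pi x %[mod #[phi]%g]) <->
        (coset (skew_core phi pi) x
           \in Fix (induced_skew phi (skew_core phi pi))) &
      (coset (skew_core phi pi) x
           \in Fix (induced_skew phi (skew_core phi pi))) <->
        (x \in skew_smooth phi pi)].
Proof.
rewrite skew_smooth_core (fix_induced_skew_core Hskew).
by split; rewrite ?(pi_orbit_constP Hskew).
Qed.
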